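(* Let $n\geq 2$ and let $(A,\cdot,[\cdot,\ldots,\cdot])$ be a simple transposed Poisson $n$-Lie algebra. Then there is no nonzero proper subspace $I\subsetneq A$ such that $[I,A,\ldots,A]\subseteq I$ and $[A\cdot I,A,\ldots,A]\subseteq I$ (i.e. $A$ contains no nonzero quasi-ideals).
   Context: An $n$-Lie algebra is a vector space $L$ with an $n$-linear skew-symmetric bracket satisfying $[[x_1,\ldots,x_n],y_2,\ldots,y_n]=\sum_{i=1}^n[x_1,\ldots,x_{i-1},[x_i,y_2,\ldots,y_n],x_{i+1},\ldots,x_n]$. A transposed Poisson $n$-Lie algebra (over $\mathbb{C}$) is a triple $(A,\cdot,[\cdot,\ldots,\cdot])$ where $(A,\cdot)$ is commutative associative, $(A,[\cdot,\ldots,\cdot])$ is an $n$-Lie algebra, and $n\,h\,[a_1,\ldots,a_n]=\sum_{i=1}^n[a_1,\ldots,h a_i,\ldots,a_n]$ for all $h,a_i\in A$. An ideal of $(A,\cdot,[\cdot,\ldots,\cdot])$ is a subspace $J$ with $A\cdot J\subseteq J$ and $[J,A,\ldots,A]\subseteq J$; the algebra is simple if $[A,\ldots,A]\neq 0$ and its only ideals are $0$ and $A$. Here $[I,A,\ldots,A]$ denotes the span of all $[u,a_2,\ldots,a_n]$ with $u\in I$, $a_k\in A$, and $A\cdot I$ the span of all products $au$ with $a\in A,u\in I$. *)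

From HB Require Import structures.
From mathcomp Require Import all_boot all_order all_algebra all_fingroup.
From mathcomp Require Import complex reals.
Set Implicit Arguments. Unset Strict Implicit. Unset Printing Implicit Defensive.
Import Order.TTheory GRing.Theory Num.Theory.
Local Open Scope ring_scope.

Section Defs.
Variables (K : pzRingType) (V : lmodType K) (n : nat).

Definition subspace (S : V -> Prop) : Prop :=
  S 0 /\ (forall (a : K) (u v : V), S u -> S v -> S (a *: u + v)).

Definition span (S : V -> Prop) : V -> Prop :=
  fun v => forall W : V -> Prop, subspace W -> (forall u, S u -> W u) -> W v.

Definition subset (S T : V -> Prop) : Prop := forall v, S v -> T v.

Definition set_at (x : 'I_n -> V) (i : 'I_n) (v : V) : 'I_n -> V :=
  fun j => if j == i then v else x j.

(* the argument list (u, y_1, ..., y_{n-1}) *)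
Definition ins0 (u : V) (y : nat -> V) : 'I_n -> V :=
  fun j => if nat_of_ord j == 0%N then u else y (nat_of_ord j).

Variables (mul : V -> V -> V) (br : ('I_n -> V) -> V).

Definition comm_assoc_algebra : Prop :=
  [/\ forall (a : K) u v w, mul (a *: u + v) w = a *: mul u w + mul v w,
      forall u v, mul u v = mul v u &
      forall u v w, mul u (mul v w) = mul (mul u v) w].

Definition multilinear : Prop :=
  forall (x : 'I_n -> V) (i : 'I_n) (a : K) (u v : V),
    br (set_at x i (a *: u + v)) = a *: br (set_at x i u) + br (set_at x i v).

Definition skew_symmetric : Prop :=
  forall (x : 'I_n -> V) (i j : 'I_n), i != j ->
    br (fun k => x (tperm i j k)) = - br x.

Definition filippov : Prop :=
  forall (x : 'I_n -> V) (y : nat -> V),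
    br (ins0 (br x) y) = \sum_(i < n) br (set_at x i (br (ins0 (x i) y))).

Definition nLie : Prop := [/\ multilinear, skew_symmetric & filippov].

Definition transposed_compat : Prop :=
  forall (h : V) (a : 'I_n -> V),
    mul h (br a) *+ n = \sum_(i < n) br (set_at a i (mul h (a i))).

Definition TPnLie : Prop := [/\ comm_assoc_algebra, nLie & transposed_compat].

Definition brI (I : V -> Prop) : V -> Prop :=
  span (fun v => exists (u : V) (a : nat -> V), I u /\ v = br (ins0 u a)).

Definition mulI (I : V -> Prop) : V -> Prop :=
  span (fun v => exists (a u : V), I u /\ v = mul a u).

Definition ideal (J : V -> Prop) : Prop :=
  [/\ subspace J, subset (mulI J) J & subset (brI J) J].

Definition zero_set : V -> Prop := fun v => v = 0.
Definition full_set : V -> Prop := fun _ => True.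

Definition simple_TPnLie : Prop :=
  [/\ TPnLie, (exists x : 'I_n -> V, br x <> 0) &
      forall J, ideal J -> (forall v, J v <-> zero_set v) \/ (forall v, J v <-> full_set v)].

Definition quasi_ideal (I : V -> Prop) : Prop :=
  [/\ subspace I, subset (brI I) I & subset (brI (mulI I)) I].

End Defs.

(** If [I] is a quasi-ideal, then [I + A.I] is an ideal: multiplying it lands in
    [A.I] by associativity, and bracketing it lands in [I] by the two
    quasi-ideal conditions. By simplicity [I + A.I = A], so every bracket lies
    in [I]. The transposed Poisson identity
    [h [a_1, ..., a_n] = 1/n sum_i [a_1, ..., h a_i, ..., a_n]] shows that the
    span of all brackets is an ideal; it is nonzero, hence equal to [A], and
    therefore [I = A]. *)

From Pilot Require Import Defs.
From HB Require Import structures.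
From mathcomp Require Import all_boot all_order all_algebra all_fingroup.
From mathcomp Require Import complex reals.
From Stdlib Require Import FunctionalExtensionality.
Set Implicit Arguments. Unset Strict Implicit. Unset Printing Implicit Defensive.
Import GRing.Theory Num.Theory.
Local Open Scope ring_scope.

Section Subspaces.
Variables (K : pzRingType) (V : lmodType K).
Implicit Types (S T W : V -> Prop).

Definition add_set S T : V -> Prop :=
  fun v => exists u w, S u /\ T w /\ v = u + w.

Lemma subspace_span S : subspace (Defs.span S).
Proof.
split=> [W [W0 _] _ //|a u v Su Sv W sW SW].
by case: (sW) => _ WD; apply: WD; [apply: Su | apply: Sv].
Qed.

Lemma span_gen S : Defs.subset S (Defs.span S).
Proof. by move=> v Sv W _; apply. Qed.

Lemma span_min S W : subspace W -> Defs.subset S W -> Defs.subset (Defs.span S) W.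
Proof. by move=> sW SW v; apply. Qed.

Lemma subspace0 W : subspace W -> W 0.
Proof. by case. Qed.

Lemma subspaceD W u v : subspace W -> W u -> W v -> W (u + v).
Proof. by case=> _ WD Wu Wv; rewrite -[u]scale1r; apply: WD. Qed.

Lemma subspaceZ W a u : subspace W -> W u -> W (a *: u).
Proof. by case=> W0 WD Wu; rewrite -[_ *: _]addr0; apply: WD. Qed.

Lemma subspace_sum W m (F : 'I_m -> V) :
  subspace W -> (forall i, W (F i)) -> W (\sum_(i < m) F i).
Proof.
move=> sW WF; apply: (big_ind W); [exact: subspace0 | | by move=> i _].
by move=> u v; apply: subspaceD.
Qed.

Lemma subspace_add_set S T : subspace S -> subspace T -> subspace (add_set S T).
Proof.
move=> [S0 SD] [T0 TD]; split; first by exists 0, 0; rewrite addr0.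
move=> a _ _ [u1 [w1 [Su1 [Tw1 ->]]]] [u2 [w2 [Su2 [Tw2 ->]]]].
exists (a *: u1 + u2), (a *: w1 + w2); do 2?split; [exact: SD | exact: TD |].
by rewrite scalerDr addrACA.
Qed.

Lemma add_set_l S T : subspace T -> Defs.subset S (add_set S T).
Proof. by move=> sT v Sv; exists v, 0; rewrite addr0; do !split=> //; case: sT. Qed.

End Subspaces.

Arguments span_min {K V S} W.

Section ArgumentLists.
Variables (K : pzRingType) (V : lmodType K) (n : nat).

Lemma ins0_set_at (i : 'I_n) (u : V) (y : nat -> V) :
  nat_of_ord i = 0%N -> ins0 u y = set_at (ins0 0 y) i u.
Proof.
move=> i_eq0; apply: functional_extensionality => j; rewrite /ins0 /set_at.
have -> : (j == i) = (nat_of_ord j == 0%N) by rewrite -i_eq0.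
by case: ifP.
Qed.

Lemma ins0_surj (x : 'I_n -> V) : exists u y, x = ins0 u y.
Proof.
case: n x => [|m] x.
  by exists 0, (fun _ => 0); apply: functional_extensionality => j; have := ltn_ord j.
exists (x ord0), (fun k => x (inord k)); apply: functional_extensionality => j.
rewrite /ins0; case: eqP => j0; congr x; apply: val_inj => /=; first by rewrite j0.
by rewrite inordK.
Qed.

End ArgumentLists.

Section QuasiIdeal.
Variables (K : pzRingType) (V : lmodType K) (n : nat).
Variables (mul : V -> V -> V) (br : ('I_n -> V) -> V).
Hypothesis mulP : comm_assoc_algebra mul.
Hypothesis br_multilinear : multilinear br.

Lemma mul_scaleDr a w (u v : V) : mul w (a *: u + v) = a *: mul w u + mul w v.
Proof. by case: mulP => mulD mulC _; rewrite mulC mulD !(mulC w). Qed.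

Lemma mul_r0 w : mul w 0 = 0.
Proof.
have := mul_scaleDr 1 w 0 0; rewrite !scale1r addr0 => mulw0D.
by apply: (addrI (mul w 0)); rewrite addr0 -mulw0D.
Qed.

Lemma subspace_mulI I : subspace (mulI mul I).
Proof. exact: subspace_span. Qed.

Lemma mulI_mul I a w : mulI mul I w -> mulI mul I (mul a w).
Proof.
case: mulP => _ _ mulA; move: w.
apply: (span_min (fun w => mulI mul I (mul a w))) => [|_ [b [w [Iw ->]]]].
  split=> [|c u v Iu Iv]; first by rewrite mul_r0; exact: subspace0 (subspace_mulI I).
  by rewrite mul_scaleDr; case: (subspace_mulI I) => _; apply.
by apply: span_gen; exists (mul a b), w; rewrite mulA.
Qed.

Hypothesis n_gt0 : (0 < n)%N.

Lemma br_ins0D (u v : V) y : br (ins0 (u + v) y) = br (ins0 u y) + br (ins0 v y).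
Proof.
have ins0E w : ins0 w y = set_at (ins0 0 y) (Ordinal n_gt0) w by exact: ins0_set_at.
rewrite (ins0E (u + v)) (ins0E u) (ins0E v).
by have := br_multilinear (ins0 0 y) (Ordinal n_gt0) 1 u v; rewrite !scale1r.
Qed.

Lemma br_ins0_add_mulI I u y :
  quasi_ideal mul br I -> add_set I (mulI mul I) u -> I (br (ins0 u y)).
Proof.
move=> [sI brII brmulII] [u1 [w1 [Iu1 [Iw1 ->]]]].
rewrite br_ins0D; apply: subspaceD sI _ _.
  by apply: brII; apply: span_gen; exists u1, y.
by apply: brmulII; apply: span_gen; exists w1, y.
Qed.

Lemma quasi_ideal_add_mulI I :
  quasi_ideal mul br I -> ideal mul br (add_set I (mulI mul I)).
Proof.
move=> qI; have sI : subspace I by case: qI.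
have sJ := subspace_add_set sI (subspace_mulI I).
split=> //.
  apply: span_min => // _ [a [_ [[u [w [Iu [Iw ->]]]] ->]]].
  exists 0, (mul a u + mul a w); split; first exact: subspace0 sI.
  split; last by rewrite add0r; have := mul_scaleDr 1 a u w; rewrite !scale1r.
  apply: subspaceD (subspace_mulI I) _ _; last exact: mulI_mul.
  by apply: span_gen; exists a, u.
apply: span_min => // _ [u [y [Ju ->]]].
by apply: add_set_l (subspace_mulI I) _ _; apply: br_ins0_add_mulI.
Qed.

End QuasiIdeal.

Section Brackets.
Variables (K : unitRingType) (V : lmodType K) (n : nat).
Variables (mul : V -> V -> V) (br : ('I_n -> V) -> V).
Hypothesis mulP : comm_assoc_algebra mul.
Hypothesis br_transposed : transposed_compat mul br.
Hypothesis n_unit : n%:R \is a @GRing.unit K.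

Definition brackets : V -> Prop := Defs.span (fun v => exists x, v = br x).

Lemma brackets_mul h k : brackets k -> brackets (mul h k).
Proof.
have sB : subspace brackets := subspace_span _.
move: k; apply: (span_min (fun k => brackets (mul h k))) => [|_ [x ->]].
  split=> [|c u v Bu Bv]; first by rewrite mul_r0 //; exact: subspace0 sB.
  by rewrite mul_scaleDr //; case: sB => _; apply.
have -> : mul h (br x) = n%:R^-1 *: (mul h (br x) *+ n).
  by rewrite -scaler_nat scalerA mulVr // scale1r.
apply: (subspaceZ _ sB); rewrite br_transposed; apply: (subspace_sum sB) => i.
by apply: span_gen; eexists.
Qed.

Lemma brackets_ideal : ideal mul br brackets.
Proof.
split; first exact: subspace_span.
  by apply: span_min => [|_ [a [k [Bk ->]]]]; [exact: subspace_span | exact: brackets_mul].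
by apply: span_min => [|_ [u [y [_ ->]]]]; [exact: subspace_span | apply: span_gen; eexists].
Qed.

End Brackets.

Lemma simple_ideal_full (K : pzRingType) (V : lmodType K) (n : nat)
    (mul : V -> V -> V) (br : ('I_n -> V) -> V) (J : V -> Prop) (v : V) :
  simple_TPnLie mul br -> ideal mul br J -> J v -> v <> 0 -> forall w, J w.
Proof.
move=> [_ _ simple] idJ Jv v_neq0 w; case: (simple J idJ) => J_eq; last exact/J_eq.
by case: v_neq0; apply/J_eq.
Qed.

Theorem mainTheorem4 (R : realType) (A : lmodType R[i]) (n : nat)
    (mul : A -> A -> A) (br : ('I_n -> A) -> A) :
  (2 <= n)%N ->
  simple_TPnLie mul br ->
  ~ (exists I : A -> Prop,
       quasi_ideal mul br I /\
       (exists v, I v /\ v <> 0) /\ (exists v, ~ I v)).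
Proof.
move=> n2 simpleA [I [qI [[v0 [Iv0 v0_neq0]] [v1 Nv1]]]].
case: (simpleA) => [[mulP [br_lin _ _] br_transposed] [x0 x0_neq0] _].
have n_gt0 : (0 < n)%N by apply: leq_trans n2.
have sI : subspace I by case: qI.
have I_mulI_full : forall u, add_set I (mulI mul I) u.
  apply: simple_ideal_full simpleA (quasi_ideal_add_mulI mulP br_lin n_gt0 qI) _ v0_neq0.
  exact/(add_set_l (subspace_mulI _ _)).
have bracketsI : Defs.subset (brackets br) I.
  apply: (span_min I sI) => _ [x ->]; have [u [y ->]] := ins0_surj x.
  exact: (br_ins0_add_mulI br_lin n_gt0 y qI (I_mulI_full u)).
have n_unit : n%:R \is a @GRing.unit R[i] by rewrite unitfE pnatr_eq0 -lt0n.
have brackets_x0 : brackets br (br x0) by apply: span_gen; exists x0.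
have brackets_full := simple_ideal_full simpleA
  (brackets_ideal mulP br_transposed n_unit) brackets_x0 x0_neq0.
exact: Nv1 (bracketsI v1 (brackets_full v1)).
Qed.
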